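(* The group $\Gamma({A_1}_1)$ of permutations of $\mathbb Q\times\mathbb Z$ preserving the 1-codirection relation ${A_1}_1$ coincides with the set of all permutations of $\mathbb Q\times\mathbb Z$ that are either positive or negative.
   Context: $\mathbb Q\times\mathbb Z$ denotes the set $\mathbb Q\times\mathbb Z$ with the lexicographic order: $(r,z)<(r',z')$ iff $r<r'$, or $r=r'$ and $z<z'$. Relations defined on $\mathbb Z$ by first-order formulas in the signature $\{<\}$ are interpreted on $\mathbb Q\times\mathbb Z$ by the same formulas, and $\Gamma(R)$ is the group of permutations of $\mathbb Q\times\mathbb Z$ preserving $R$ (i.e. $R(\bar a)\iff R(g(\bar a))$). The 1-codirection relation is ${A_1}_1(x,y,z,t)\iff (x-y=z-t)\wedge|x-y|=1$, expressed in the order signature as: ($x$ is the immediate successor of $y$ and $z$ is the immediate successor of $t$) or ($y$ is the immediate successor of $x$ and $t$ is the immediate successor of $z$). A vertical is a set $\{r\}\times\mathbb Z$, $r\in\mathbb Q$. A permutation is systemic if it maps every vertical onto a vertical. A systemic permutation is positive if it preserves the order on each vertical (i.e. its restriction to each vertical is order preserving), and negative if it reverses the order on each vertical. *)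

From mathcomp Require Import all_boot all_order all_algebra.
Set Implicit Arguments. Unset Strict Implicit. Unset Printing Implicit Defensive.
Import Order.TTheory GRing.Theory Num.Theory.
Local Open Scope ring_scope.

Definition QZ : Type := (rat * int)%type.

Definition lexlt (a b : QZ) : Prop :=
  a.1 < b.1 \/ (a.1 = b.1 /\ a.2 < b.2).

Definition imm_succ (x y : QZ) : Prop :=
  lexlt y x /\ ~ (exists w : QZ, lexlt y w /\ lexlt w x).

Definition A11 (x y z t : QZ) : Prop :=
  (imm_succ x y /\ imm_succ z t) \/ (imm_succ y x /\ imm_succ t z).

Definition preserves4 (R : QZ -> QZ -> QZ -> QZ -> Prop) (g : QZ -> QZ) : Prop :=
  forall x y z t : QZ, R x y z t <-> R (g x) (g y) (g z) (g t).

Definition vertical (r : rat) (p : QZ) : Prop := p.1 = r.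

Definition systemic (g : QZ -> QZ) : Prop :=
  forall r : rat, exists r' : rat,
    (forall z : int, vertical r' (g (r, z))) /\
    (forall z' : int, exists z : int, g (r, z) = (r', z')).

Definition positive_perm (g : QZ -> QZ) : Prop :=
  systemic g /\
  forall (r : rat) (z1 z2 : int), z1 < z2 -> lexlt (g (r, z1)) (g (r, z2)).

Definition negative_perm (g : QZ -> QZ) : Prop :=
  systemic g /\
  forall (r : rat) (z1 z2 : int), z1 < z2 -> lexlt (g (r, z2)) (g (r, z1)).

From mathcomp Require Import all_boot all_order all_algebra.
From mathcomp Require Import zify.
Set Implicit Arguments. Unset Strict Implicit. Unset Printing Implicit Defensive.
Import Order.TTheory GRing.Theory Num.Theory.
Local Open Scope ring_scope.

(* In Q x Z the immediate successor of (r, z) is (r, z + 1), so A11 x y z t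
   says that x = y + e and z = t + e for a common vertical step e = 1 or -1.
   Comparing the images of the pairs (p + 1, p) and (q + 1, q) shows that a
   permutation preserving A11 maps every vertical step p |-> p + 1 to the same
   step by e, hence acts on each vertical as z |-> c + e z: positively or
   negatively.  Conversely, on each vertical a positive (negative) permutation
   induces a strictly increasing (decreasing) bijection of Z, which can only
   be a translation (a reflection). *)

Definition shift (k : int) (p : QZ) : QZ := (p.1, p.2 + k).

Lemma shift0 p : shift 0 p = p.
Proof. by case: p => r z; rewrite /shift addr0. Qed.

Lemma shiftD k l p : shift k (shift l p) = shift (l + k) p.
Proof. by rewrite /shift /= addrA. Qed.

Lemma shiftK k : cancel (shift k) (shift (- k)).
Proof. by move=> p; rewrite shiftD subrr shift0. Qed.

Lemma shift_inj p k l : shift k p = shift l p -> k = l.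
Proof. by move/(congr1 snd)/addrI. Qed.

Lemma lexlt_vertical a b : a.1 = b.1 -> lexlt a b <-> a.2 < b.2.
Proof. by move=> ab; rewrite /lexlt ab ltxx; split=> [[] // []|]; [|right]. Qed.

Lemma imm_succE x y : imm_succ x y <-> x = shift 1 y.
Proof.
case: x y => [x1 x2] [y1 y2]; rewrite /imm_succ /lexlt /shift /=.
split=> [[yx no_between] | [-> ->]].
- have between (w : QZ) : lexlt (y1, y2) w -> lexlt w (x1, x2) -> False.
    by move=> yw wx; apply: no_between; exists w.
  have [y1x1 | [y1x1 y2x2]] := yx; last subst x1.
    by case: (between (y1, y2 + 1)); rewrite /lexlt /=; [right; split=> //; lia | left].
  case: (ltgtP x2 (y2 + 1)) => [|x2_gt|-> //]; first lia.
  by case: (between (y1, y2 + 1)); rewrite /lexlt /=; right; split=> //; lia.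
- split; first by right; split=> //; lia.
  case=> -[w1 w2] [[y1w1 | [e1 lt1]] [w1y1 | [e2 lt2]]] /=.
  + by have := lt_trans y1w1 w1y1; rewrite ltxx.
  + by move: y1w1; rewrite e2 ltxx.
  + by move: w1y1; rewrite -e1 ltxx.
  + lia.
Qed.

Lemma A11E x y z t :
  A11 x y z t <-> exists2 e : int, `|e| = 1 & x = shift e y /\ z = shift e t.
Proof.
rewrite /A11 !imm_succE; split.
- by case=> -[-> ->]; [exists 1 | exists (-1); rewrite ?shiftK].
- case=> e e_unit [-> ->]; have [-> | ->] : e = 1 \/ e = -1 by lia.
    by left.
  by right; rewrite !shiftD addNr !shift0.
Qed.

Lemma normz1_mulK (e : int) : `|e| = 1 -> forall x, e * (e * x) = x.
Proof. by move=> e_unit x; nia. Qed.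

Definition shifts_by (e : int) (g : QZ -> QZ) : Prop :=
  forall p, g (shift 1 p) = shift e (g p).

Section ShiftsBy.

Variables (e : int) (g : QZ -> QZ).
Hypothesis g_step : shifts_by e g.

Lemma shifts_by_shift k p : g (shift k p) = shift (e * k) (g p).
Proof.
elim/int_rec: k => [|n IH|n IH]; first by rewrite mulr0 !shift0.
- by rewrite -addn1 PoszD -shiftD g_step IH shiftD mulrDr mulr1.
- have := g_step (shift (- n.+1%:Z) p); rewrite shiftD.
  have -> : - n.+1%:Z + 1 = - n%:Z by lia.
  by rewrite IH => /(congr1 (shift (- e))); rewrite shiftK shiftD => <-; congr shift; lia.
Qed.

Lemma shifts_by_vertical r z : g (r, z) = ((g (r, 0)).1, (g (r, 0)).2 + e * z).
Proof. by have := shifts_by_shift z (r, 0); rewrite /shift /= add0r. Qed.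

Lemma shifts_by_systemic : `|e| = 1 -> systemic g.
Proof.
move=> e_unit r; exists (g (r, 0)).1; split=> [z | z'].
  by rewrite /vertical shifts_by_vertical.
by exists (e * (z' - (g (r, 0)).2)); rewrite shifts_by_vertical normz1_mulK // addrC subrK.
Qed.

Lemma shifts_by_lexlt r z1 z2 : lexlt (g (r, z1)) (g (r, z2)) <-> e * z1 < e * z2.
Proof.
by rewrite (shifts_by_vertical r z1) (shifts_by_vertical r z2) lexlt_vertical //= ltrD2l.
Qed.

Lemma shifts_by_shiftE : injective g ->
  forall k x y, x = shift k y <-> g x = shift (e * k) (g y).
Proof.
move=> g_inj k x y; split=> [-> | ]; first exact: shifts_by_shift.
by rewrite -shifts_by_shift => /g_inj.
Qed.

End ShiftsBy.

Lemma preserves_A11_shifts_by g :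
  preserves4 A11 g -> exists2 e : int, `|e| = 1 & shifts_by e g.
Proof.
move=> g_A11; pose o : QZ := (0, 0).
have /g_A11 /A11E [e e_unit [ge _]] : A11 (shift 1 o) o (shift 1 o) o.
  by apply/A11E; exists 1.
exists e => // p.
have /g_A11 /A11E [e' _ [gp go]] : A11 (shift 1 p) p (shift 1 o) o.
  by apply/A11E; exists 1.
by rewrite gp (@shift_inj (g o) e' e) // -go ge.
Qed.

Lemma shifts_by_preserves_A11 e g :
  injective g -> `|e| = 1 -> shifts_by e g -> preserves4 A11 g.
Proof.
move=> g_inj e_unit g_step x y z t; have gE := shifts_by_shiftE g_step g_inj.
rewrite !A11E; split=> -[k k_unit [xy zt]]; exists (e * k).
- by rewrite normrM e_unit k_unit.
- by split; apply: (gE k _ _).1.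
- by rewrite normrM e_unit k_unit.
- by split; apply: (gE (e * k) _ _).2; rewrite normz1_mulK.
Qed.

Lemma incr_surj_succ (f : int -> int) :
  (forall z1 z2, z1 < z2 -> f z1 < f z2) -> (forall y, exists z, f z = y) ->
  forall z, f (z + 1) = f z + 1.
Proof.
move=> f_incr f_surj z; have [w fw] := f_surj (f z + 1).
have f_le a b : a <= b -> f a <= f b.
  by rewrite le_eqVlt => /predU1P [-> // | /f_incr /ltW].
have : f z < f (z + 1) by apply: f_incr; lia.
case: (ltgtP w (z + 1)) => [w_lt | w_gt | <- //].
- have : f w <= f z by apply: f_le; lia.
  lia.
- have := f_incr _ _ w_gt; lia.
Qed.

Lemma systemic_vertical g r z1 z2 : systemic g -> (g (r, z1)).1 = (g (r, z2)).1.
Proof. by case/(_ r) => r' [g_r _]; rewrite (g_r z1) (g_r z2). Qed.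

Lemma systemic_shifts_by e g : `|e| = 1 -> systemic g ->
  (forall r z1 z2, z1 < z2 -> e * (g (r, z1)).2 < e * (g (r, z2)).2) ->
  shifts_by e g.
Proof.
move=> e_unit g_sys g_mono [r z]; have [r' [_ g_onto]] := g_sys r.
have f_surj y : exists z, e * (g (r, z)).2 = y.
  by have [w gw] := g_onto (e * y); exists w; rewrite gw normz1_mulK.
have := incr_surj_succ (g_mono r) f_surj z.
move/(congr1 ( *%R e)); rewrite /= mulrDr mulr1 !normz1_mulK // => f_succ.
by rewrite /shift /= [LHS]surjective_pairing f_succ (systemic_vertical _ (z + 1) z g_sys).
Qed.

Lemma positive_permE g : positive_perm g <-> shifts_by 1 g.
Proof.
split=> [[g_sys g_incr] | g_step].
  apply: systemic_shifts_by => // r z1 z2 /(g_incr r).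
  by rewrite !mul1r lexlt_vertical //; exact: systemic_vertical.
split; first exact: shifts_by_systemic.
by move=> r z1 z2 lt12; rewrite (shifts_by_lexlt g_step) !mul1r.
Qed.

Lemma negative_permE g : negative_perm g <-> shifts_by (-1) g.
Proof.
split=> [[g_sys g_decr] | g_step].
  apply: systemic_shifts_by => // r z1 z2 /(g_decr r).
  by rewrite !mulN1r ltrN2 lexlt_vertical //; exact: systemic_vertical.
split; first exact: shifts_by_systemic.
by move=> r z1 z2 lt12; rewrite (shifts_by_lexlt g_step) !mulN1r ltrN2.
Qed.

Theorem lemma1 (g : QZ -> QZ) (hg : bijective g) :
  preserves4 A11 g <-> (positive_perm g \/ negative_perm g).
Proof.
rewrite positive_permE negative_permE; split.
- case/preserves_A11_shifts_by => e e_unit g_step.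
  have [e1 | e1] : e = 1 \/ e = -1 by lia.
    by left; rewrite -e1.
  by right; rewrite -e1.
- by case=> g_step; apply: (shifts_by_preserves_A11 (bij_inj hg) _ g_step).
Qed.
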